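(* Consider the two-layer multi-item order fulfillment problem described in the context with a single FDC ($K=1$), fixed costs $f_0\ge0$, $f_1>0$, and variable costs in $[a,b]$ for constants $b>a>0$. Let \textsc{Better-of-Two} run \textsc{Cost-Comparison AdjV-Priority} whenever $f_0\le f_1$ or $1+\max\{f_0/f_1,\sqrt{b/a}\}\le(4+\sqrt2)\max\{\sqrt{f_0/(2a)},\sqrt{b/a}\}$, and otherwise run \textsc{Order-Size AdjV-Priority} with $\eta=\sqrt{\max\{f_0/2,b\}/a}$ and $\theta=f_0/(2a\eta)$. Then \[\mathfrak R(\textsc{Better-of-Two})\le\min\left\{1+\max\left\{\frac{f_0}{f_1},\sqrt{\frac ba}\right\},\ B\right\}\le\max\left\{\min\left\{2\frac{f_0}{f_1},\ (2\sqrt2+1)\sqrt{\frac{f_0}{a}}\right\},\ (4+\sqrt2)\sqrt{\frac ba}\right\},\] where $B=(4+\sqrt2)\sqrt{\max\{f_0/2,b\}/a}$ if $f_0\ge f_1$ and $B=+\infty$ if $f_0<f_1$.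
   Context: Problem with one FDC (index $1$) and one RDC (index $0$, unlimited inventory). The FDC initially holds $I_{1,0}^i\ge0$ units of item $i\in[n]$, never replenished. In periods $t=1,\dots,T$ an order $\boldsymbol S_t=(S_t^i)_i$ of nonnegative integers arrives; the policy must immediately and irrevocably choose $m_{0,t}^i,m_{1,t}^i\ge0$ with $m_{0,t}^i+m_{1,t}^i=S_t^i$ and $m_{1,t}^i\le I_{1,t-1}^i$, where $I_{1,t}^i=I_{1,0}^i-\sum_{\tau\le t}m_{1,\tau}^i$. Period cost $\sum_{k=0,1}[f_k\mathbb{I}(\sum_im_{k,t}^i>0)+\sum_ic_{k,t}^im_{k,t}^i]$; total cost is the sum. Online policies use only fixed costs, initial inventories, constants $a,b$ and orders/variable costs up to the current period. $\mathfrak R(\mathrm{ALG})$ is the supremum of (expected) policy cost over offline optimal cost, over all $n,T$, initial inventories, variable costs in $[a,b]$ and order sequences. \textsc{Cost-Comparison AdjV-Priority}: in period $t$, for each $i$, $\hat m_{1,t}^i=\min\{S_t^i,I_{1,t-1}^i\}$ if $c_{1,t}^i<\sqrt{a/b}\,c_{0,t}^i$ else $0$, $\hat m_{0,t}^i=S_t^i-\hat m_{1,t}^i$; if $\sum_{k=0,1}[f_k\mathbb{I}(\sum_i\hat m_{k,t}^i>0)+\sum_ic_{k,t}^i\hat m_{k,t}^i]>f_0+\sum_ic_{0,t}^iS_t^i$ then the whole order is fulfilled from the RDC, otherwise $m=\hat m$. \textsc{Order-Size AdjV-Priority} with parameters $\eta\ge1,\theta\ge0$: in period $t$, for each $i$,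 $\hat m_{1,t}^i=\min\{S_t^i,I_{1,t-1}^i\}$ if $c_{1,t}^i<c_{0,t}^i/\eta$ else $0$, $\hat m_{0,t}^i=S_t^i-\hat m_{1,t}^i$; if $\sum_iS_t^i\le\theta$ and $I_{1,t-1}^i\ge S_t^i$ for all $i$, the whole order is fulfilled from the FDC, otherwise $m=\hat m$. *)

From Stdlib Require Import Reals Lra Lia List.
Open Scope R_scope.

Fixpoint sumR (k : nat) (f : nat -> R) : R :=
  match k with O => 0 | S k' => sumR k' f + f k' end.

Fixpoint sumN (k : nat) (f : nat -> nat) : nat :=
  match k with O => O | S k' => (sumN k' f + f k')%nat end.

(* An instance: n items (indexed 0..n-1), periods 1..T.
   ord t i = S_t^i, c0 t i = c_{0,t}^i, c1 t i = c_{1,t}^i, I0 i = I_{1,0}^i.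
   A decision in period t is given by m1 : nat -> nat (item -> m_{1,t}^i);
   m_{0,t}^i = S_t^i - m_{1,t}^i. *)

Definition indic (b : bool) : R := if b then 1 else 0.

Definition anypos (n : nat) (m : nat -> nat) : bool :=
  existsb (fun i => Nat.ltb 0 (m i)) (seq 0 n).

Definition period_cost (f0 f1 : R) (n : nat) (St : nat -> nat)
  (c0t c1t : nat -> R) (m1 : nat -> nat) : R :=
  let m0 := fun i => (St i - m1 i)%nat in
  f0 * indic (anypos n m0) + f1 * indic (anypos n m1)
  + sumR n (fun i => c0t i * INR (m0 i) + c1t i * INR (m1 i)).

Definition cc_decision (f0 f1 a b : R) (n : nat) (St : nat -> nat)
  (c0t c1t : nat -> R) (I : nat -> nat) : nat -> nat :=
  let mhat := fun i => if Rlt_dec (c1t i) (sqrt (a / b) * c0t i)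
                       then Nat.min (St i) (I i) else O in
  if Rlt_dec (f0 + sumR n (fun i => c0t i * INR (St i)))
             (period_cost f0 f1 n St c0t c1t mhat)
  then (fun _ => O) else mhat.

Definition os_decision (eta theta : R) (n : nat) (St : nat -> nat)
  (c0t c1t : nat -> R) (I : nat -> nat) : nat -> nat :=
  let mhat := fun i => if Rlt_dec (c1t i) (c0t i / eta)
                       then Nat.min (St i) (I i) else O in
  if Rle_dec (INR (sumN n St)) theta then
    if forallb (fun i => Nat.leb (St i) (I i)) (seq 0 n) then St else mhat
  else mhat.

(* A (deterministic, online) decision rule: period-t data and current
   inventory -> m_{1,t}. *)
Definition rule := (nat -> nat) -> (nat -> R) -> (nat -> R) -> (nat -> nat) -> nat -> nat.

Fixpoint run (f0 f1 : R) (n : nat) (I0 : nat -> nat) (ord : nat -> nat -> nat)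
  (c0 c1 : nat -> nat -> R) (dec : rule) (k : nat) : (nat -> nat) * R :=
  match k with
  | O => (I0, 0)
  | S k' =>
      let (I, C) := run f0 f1 n I0 ord c0 c1 dec k' in
      let t := S k' in
      let m1 := dec (ord t) (c0 t) (c1 t) I in
      (fun i => (I i - m1 i)%nat, C + period_cost f0 f1 n (ord t) (c0 t) (c1 t) m1)
  end.

Definition policy_cost f0 f1 n I0 ord c0 c1 (dec : rule) (T : nat) : R :=
  snd (run f0 f1 n I0 ord c0 c1 dec T).

Definition use_cc (f0 f1 a b : R) : Prop :=
  f0 <= f1 \/
  1 + Rmax (f0 / f1) (sqrt (b / a))
    <= (4 + sqrt 2) * Rmax (sqrt (f0 / (2 * a))) (sqrt (b / a)).

Definition bot_eta (f0 a b : R) : R := sqrt (Rmax (f0 / 2) b / a).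
Definition bot_theta (f0 a b : R) : R := f0 / (2 * a * bot_eta f0 a b).

Definition better_of_two (f0 f1 a b : R) (n : nat) : rule :=
  if Rle_dec f0 f1 then cc_decision f0 f1 a b n
  else if Rle_dec (1 + Rmax (f0 / f1) (sqrt (b / a)))
                  ((4 + sqrt 2) * Rmax (sqrt (f0 / (2 * a))) (sqrt (b / a)))
  then cc_decision f0 f1 a b n
  else os_decision (bot_eta f0 a b) (bot_theta f0 a b) n.

Definition feasible (n T : nat) (I0 : nat -> nat) (ord : nat -> nat -> nat)
  (m1 : nat -> nat -> nat) : Prop :=
  forall t i, (1 <= t <= T)%nat -> (i < n)%nat ->
    (m1 t i <= ord t i)%nat /\
    (sumN t (fun s => m1 (S s) i) <= I0 i)%nat.

Definition plan_cost f0 f1 (n T : nat) (ord : nat -> nat -> nat)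
  (c0 c1 : nat -> nat -> R) (m1 : nat -> nat -> nat) : R :=
  sumR T (fun s => period_cost f0 f1 n (ord (S s)) (c0 (S s)) (c1 (S s)) (m1 (S s))).

Definition costs_in (a b : R) (n T : nat) (c : nat -> nat -> R) : Prop :=
  forall t i, (1 <= t <= T)%nat -> (i < n)%nat -> a <= c t i <= b.

(* First bound: min{1 + max{f0/f1, sqrt(b/a)}, B}, B = +oo if f0 < f1. *)
Definition bound1 (f0 f1 a b : R) : R :=
  let X := 1 + Rmax (f0 / f1) (sqrt (b / a)) in
  let B := (4 + sqrt 2) * sqrt (Rmax (f0 / 2) b / a) in
  if Rlt_dec f0 f1 then X else Rmin X B.

Definition bound2 (f0 f1 a b : R) : R :=
  Rmax (Rmin (2 * (f0 / f1)) ((2 * sqrt 2 + 1) * sqrt (f0 / a)))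
       ((4 + sqrt 2) * sqrt (b / a)).

From Stdlib Require Import Reals Lra Lia List.
Open Scope R_scope.

(* Each rule is compared, period by period, with an arbitrary feasible offline plan [m]
   through a potential.  In a period where the policy ships [x] from the FDC while holding
   stock [I], it is credited [W] per unit of [(x - m)^+] and charged [W] per unit of
   [(m - I)^+].  Over the horizon the charges never exceed the credits, item by item: the
   policy can only have less stock than the plan needs after having shipped more than the
   plan.  Hence the per-period inequality
     cost(x) + W (x - m)^+  <=  K cost(m) + W (m - I)^+
   makes the policy [K]-competitive.  Cost-Comparison satisfies it with [W = b] and
   [K = 1 + max (f0/f1) (sqrt (b/a))]; Order-Size with [W = f0 + b] and [K = 4 eta], which
   is below [B = (4 + sqrt 2) eta].  In both (Cost-Comparison has [eta = sqrt (b/a)]), an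
   item sent to the FDC has [c0 > eta c1 >= eta a], so its RDC cost pays for [W]; an order of Order-Size served
   entirely by the FDC is either small (cost at most [f1 + b theta]) or pays for [f0]
   through its size or through a stock-out. *)

Lemma sumR_ext k f g : (forall i, (i < k)%nat -> f i = g i) -> sumR k f = sumR k g.
Proof.
  induction k as [|k IH]; intros H; simpl; [reflexivity|].
  rewrite IH, H; [reflexivity|lia|intros; apply H; lia].
Qed.

Lemma sumR_le k f g : (forall i, (i < k)%nat -> f i <= g i) -> sumR k f <= sumR k g.
Proof.
  induction k as [|k IH]; intros H; simpl; [lra|].
  assert (f k <= g k) by (apply H; lia).
  assert (sumR k f <= sumR k g) by (apply IH; intros; apply H; lia).
  lra.
Qed.

Lemma sumR_add k f g : sumR k (fun i => f i + g i) = sumR k f + sumR k g.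
Proof. induction k as [|k IH]; simpl; [lra|]. rewrite IH. lra. Qed.

Lemma sumR_scal k c f : sumR k (fun i => c * f i) = c * sumR k f.
Proof. induction k as [|k IH]; simpl; [lra|]. rewrite IH. lra. Qed.

Lemma sumR_nonneg k f : (forall i, (i < k)%nat -> 0 <= f i) -> 0 <= sumR k f.
Proof.
  intros H. replace 0 with (sumR k (fun _ => 0)).
  - apply sumR_le. exact H.
  - induction k as [|k IH]; simpl; [reflexivity|]. rewrite IH by (intros; apply H; lia). lra.
Qed.

Lemma sumR_0 k f : (forall i, (i < k)%nat -> f i = 0) -> sumR k f = 0.
Proof.
  induction k as [|k IH]; intros H; simpl; [reflexivity|].
  rewrite IH, H; [lra|lia|intros; apply H; lia].
Qed.

Lemma sumR_ge_term k f i :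
  (i < k)%nat -> (forall j, (j < k)%nat -> 0 <= f j) -> f i <= sumR k f.
Proof.
  induction k as [|k IH]; intros Hi H; simpl; [lia|].
  assert (0 <= sumR k f) by (apply sumR_nonneg; intros; apply H; lia).
  destruct (Nat.eq_dec i k) as [->|Hne]; [lra|].
  assert (f i <= sumR k f) by (apply IH; [lia|intros; apply H; lia]).
  assert (0 <= f k) by (apply H; lia).
  lra.
Qed.

Lemma sumR_INR k g : sumR k (fun i => INR (g i)) = INR (sumN k g).
Proof. induction k as [|k IH]; simpl; [reflexivity|]. rewrite IH, plus_INR. reflexivity. Qed.

Lemma sumR_weighted_bounds lo hi n (c : nat -> R) (x : nat -> nat) :
  (forall i, (i < n)%nat -> lo <= c i <= hi) ->
  lo * INR (sumN n x) <= sumR n (fun i => c i * INR (x i)) <= hi * INR (sumN n x).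
Proof.
  intros Hc. rewrite <- sumR_INR, <- !sumR_scal.
  split; apply sumR_le; intros i Hi; apply Rmult_le_compat_r; try apply pos_INR; apply Hc, Hi.
Qed.

Lemma sumR_comm T n F :
  sumR T (fun t => sumR n (fun i => F t i)) = sumR n (fun i => sumR T (fun t => F t i)).
Proof.
  induction T as [|T IH]; simpl.
  - symmetry. apply sumR_0. reflexivity.
  - rewrite IH, <- sumR_add. reflexivity.
Qed.

Lemma anypos_spec n m : anypos n m = true <-> exists i, (i < n)%nat /\ (0 < m i)%nat.
Proof.
  unfold anypos. rewrite existsb_exists. split.
  - intros [i [Hi Hm]]. apply in_seq in Hi. apply Nat.ltb_lt in Hm. exists i. split; lia.
  - intros [i [Hi Hm]]. exists i. split; [apply in_seq; lia|apply Nat.ltb_lt; exact Hm].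
Qed.

Lemma anypos_false_spec n m : anypos n m = false <-> forall i, (i < n)%nat -> m i = 0%nat.
Proof.
  split.
  - intros H i Hi. destruct (m i) eqn:E; [reflexivity|].
    assert (anypos n m = true) by (apply anypos_spec; exists i; split; lia). congruence.
  - intros H. destruct (anypos n m) eqn:E; [|reflexivity].
    apply anypos_spec in E as [i [Hi Hm]]. rewrite H in Hm; lia.
Qed.

Lemma anypos_ext n x y : (forall i, (i < n)%nat -> x i = y i) -> anypos n x = anypos n y.
Proof.
  intros H. destruct (anypos n y) eqn:Ey.
  - apply anypos_spec in Ey as [i [Hi Hy]]. apply anypos_spec. exists i. rewrite H; auto.
  - apply anypos_false_spec. intros i Hi. rewrite H by exact Hi.
    exact (proj1 (anypos_false_spec n y) Ey i Hi).
Qed.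

Definition fixed_cost f0 f1 n (St x : nat -> nat) : R :=
  f0 * indic (anypos n (fun i => (St i - x i)%nat)) + f1 * indic (anypos n x).

Definition var_cost n (St : nat -> nat) (c0 c1 : nat -> R) (x : nat -> nat) : R :=
  sumR n (fun i => c0 i * INR (St i - x i) + c1 i * INR (x i)).

Definition excess n (x y : nat -> nat) : R := sumR n (fun i => INR (x i - y i)).

Lemma period_cost_split f0 f1 n St c0 c1 x :
  period_cost f0 f1 n St c0 c1 x = fixed_cost f0 f1 n St x + var_cost n St c0 c1 x.
Proof. reflexivity. Qed.

Lemma indic_bounds c : 0 <= indic c <= 1.
Proof. destruct c; simpl; lra. Qed.

Lemma fixed_cost_bounds f0 f1 n St x :
  0 <= f0 -> 0 <= f1 -> 0 <= fixed_cost f0 f1 n St x <= f0 + f1.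
Proof.
  intros H0 H1. unfold fixed_cost.
  pose proof (indic_bounds (anypos n (fun i => (St i - x i)%nat))).
  pose proof (indic_bounds (anypos n x)).
  nra.
Qed.

Lemma var_cost_nonneg n St c0 c1 x :
  (forall i, (i < n)%nat -> 0 <= c0 i /\ 0 <= c1 i) -> 0 <= var_cost n St c0 c1 x.
Proof.
  intros Hc. apply sumR_nonneg. intros i Hi. destruct (Hc i Hi).
  pose proof (pos_INR (St i - x i)). pose proof (pos_INR (x i)). nra.
Qed.

Lemma period_cost_nonneg f0 f1 n St c0 c1 x :
  0 <= f0 -> 0 <= f1 -> (forall i, (i < n)%nat -> 0 <= c0 i /\ 0 <= c1 i) ->
  0 <= period_cost f0 f1 n St c0 c1 x.
Proof.
  intros H0 H1 Hc. rewrite period_cost_split.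
  pose proof (fixed_cost_bounds f0 f1 n St x H0 H1).
  pose proof (var_cost_nonneg n St c0 c1 x Hc).
  lra.
Qed.

Lemma period_cost_ext f0 f1 n St c0 c1 x y :
  (forall i, (i < n)%nat -> x i = y i) ->
  period_cost f0 f1 n St c0 c1 x = period_cost f0 f1 n St c0 c1 y.
Proof.
  intros H. rewrite !period_cost_split. unfold fixed_cost, var_cost.
  rewrite (anypos_ext n x y H).
  rewrite (anypos_ext n (fun i => (St i - x i)%nat) (fun i => (St i - y i)%nat))
    by (intros i Hi; rewrite H by exact Hi; reflexivity).
  f_equal. apply sumR_ext. intros i Hi. rewrite H by exact Hi. reflexivity.
Qed.

Lemma period_cost_no_demand f0 f1 n St c0 c1 x :
  (forall i, (i < n)%nat -> St i = 0%nat) -> (forall i, (i < n)%nat -> (x i <= St i)%nat) ->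
  period_cost f0 f1 n St c0 c1 x = 0.
Proof.
  intros HS Hx. rewrite period_cost_split. unfold fixed_cost, var_cost.
  assert (Hx0 : forall i, (i < n)%nat -> x i = 0%nat)
    by (intros i Hi; specialize (HS i Hi); specialize (Hx i Hi); lia).
  rewrite (proj2 (anypos_false_spec n x) Hx0).
  rewrite (proj2 (anypos_false_spec n (fun i => (St i - x i)%nat)))
    by (intros i Hi; rewrite HS by exact Hi; reflexivity).
  rewrite sumR_0; [simpl; ring|].
  intros i Hi. rewrite HS, Hx0 by exact Hi. simpl. ring.
Qed.

Lemma period_cost_all_rdc f0 f1 n St c0 c1 :
  period_cost f0 f1 n St c0 c1 (fun _ => 0%nat)
  = f0 * indic (anypos n St) + sumR n (fun i => c0 i * INR (St i)).
Proof.
  rewrite period_cost_split. unfold fixed_cost, var_cost.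
  rewrite (proj2 (anypos_false_spec n (fun _ => 0%nat))) by reflexivity.
  rewrite (anypos_ext n (fun i => (St i - 0)%nat) St) by (intros; lia).
  rewrite (sumR_ext n _ (fun i => c0 i * INR (St i))); [simpl; ring|].
  intros i Hi. rewrite Nat.sub_0_r. simpl. ring.
Qed.

Lemma period_cost_all_fdc f0 f1 n St c0 c1 :
  period_cost f0 f1 n St c0 c1 St
  = f1 * indic (anypos n St) + sumR n (fun i => c1 i * INR (St i)).
Proof.
  rewrite period_cost_split. unfold fixed_cost, var_cost.
  rewrite (proj2 (anypos_false_spec n (fun i => (St i - St i)%nat))) by (intros; lia).
  rewrite (sumR_ext n _ (fun i => c1 i * INR (St i))); [simpl; ring|].
  intros i Hi. rewrite Nat.sub_diag. simpl. ring.
Qed.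

Lemma excess_nonneg n x y : 0 <= excess n x y.
Proof. apply sumR_nonneg. intros. apply pos_INR. Qed.

Lemma excess_0 n x y : (forall i, (i < n)%nat -> (x i <= y i)%nat) -> excess n x y = 0.
Proof.
  intros H. apply sumR_0. intros i Hi.
  replace (x i - y i)%nat with 0%nat by (specialize (H i Hi); lia). reflexivity.
Qed.

Lemma excess_le_total n x y : excess n x y <= INR (sumN n x).
Proof. rewrite <- sumR_INR. apply sumR_le. intros. apply le_INR. lia. Qed.

Lemma excess_ext n x y x' y' :
  (forall i, (i < n)%nat -> x i = x' i /\ y i = y' i) -> excess n x y = excess n x' y'.
Proof. intros H. apply sumR_ext. intros i Hi. destruct (H i Hi) as [-> ->]. reflexivity. Qed.

Lemma sumN_shortfall_le_excess (inv u m : nat -> nat) I0 T :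
  inv 0%nat = I0 ->
  (forall s, (s < T)%nat -> (u s <= inv s)%nat /\ inv (S s) = (inv s - u s)%nat) ->
  (forall k, (k <= T)%nat -> (sumN k m <= I0)%nat) ->
  (sumN T (fun s => m s - inv s) <= sumN T (fun s => u s - m s))%nat.
Proof.
  intros H0 Hstep Hplan.
  assert (Hinv : forall k, (k <= T)%nat ->
    (sumN k (fun s => m s - inv s) <= sumN k (fun s => u s - m s))%nat /\
    (sumN k (fun s => m s - inv s) + I0
       <= sumN k (fun s => u s - m s) + inv k + sumN k m)%nat).
  { induction k as [|k IH]; intros Hk; simpl; [lia|].
    destruct IH as [IH1 IH2]; [lia|].
    destruct (Hstep k) as [Hu Hinv]; [lia|].
    pose proof (Hplan (S k) Hk) as Hm. simpl in Hm.
    rewrite Hinv. lia. }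
  apply Hinv. lia.
Qed.

Definition amortized_step f0 f1 n (K W : R) St c0 c1 (I m x : nat -> nat) : Prop :=
  (forall i, (i < n)%nat -> (x i <= I i)%nat) /\
  period_cost f0 f1 n St c0 c1 x + W * excess n x m
  <= K * period_cost f0 f1 n St c0 c1 m + W * excess n m I.

Lemma run_S f0 f1 n I0 ord c0 c1 (dec : rule) k :
  let I := fst (run f0 f1 n I0 ord c0 c1 dec k) in
  let x := dec (ord (S k)) (c0 (S k)) (c1 (S k)) I in
  run f0 f1 n I0 ord c0 c1 dec (S k) =
  (fun i => (I i - x i)%nat,
   snd (run f0 f1 n I0 ord c0 c1 dec k) + period_cost f0 f1 n (ord (S k)) (c0 (S k)) (c1 (S k)) x).
Proof. simpl. destruct (run f0 f1 n I0 ord c0 c1 dec k). reflexivity. Qed.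

Lemma sumR_excess_comm T n (x y : nat -> nat -> nat) :
  sumR T (fun s => excess n (x s) (y s))
  = sumR n (fun i => INR (sumN T (fun s => x s i - y s i)%nat)).
Proof.
  unfold excess. rewrite sumR_comm. apply sumR_ext. intros i _. apply sumR_INR.
Qed.

Lemma policy_cost_le_of_amortized f0 f1 n I0 ord c0 c1 (dec : rule) T m1 K W :
  0 <= W -> feasible n T I0 ord m1 ->
  (forall t I, (1 <= t <= T)%nat ->
     amortized_step f0 f1 n K W (ord t) (c0 t) (c1 t) I (m1 t) (dec (ord t) (c0 t) (c1 t) I)) ->
  policy_cost f0 f1 n I0 ord c0 c1 dec T <= K * plan_cost f0 f1 n T ord c0 c1 m1.
Proof.
  intros HW Hfeas Hstep. unfold policy_cost, plan_cost.
  set (inv := fun k => fst (run f0 f1 n I0 ord c0 c1 dec k)).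
  set (u := fun s => dec (ord (S s)) (c0 (S s)) (c1 (S s)) (inv s)).
  assert (Hsum : forall k, (k <= T)%nat ->
    snd (run f0 f1 n I0 ord c0 c1 dec k) + W * sumR k (fun s => excess n (u s) (m1 (S s)))
    <= K * sumR k (fun s => period_cost f0 f1 n (ord (S s)) (c0 (S s)) (c1 (S s)) (m1 (S s)))
       + W * sumR k (fun s => excess n (m1 (S s)) (inv s))).
  { induction k as [|k IH]; intros Hk; [simpl; lra|].
    rewrite run_S. cbn zeta. simpl snd. simpl sumR.
    destruct (Hstep (S k) (inv k)) as [_ Hk']; [lia|].
    specialize (IH ltac:(lia)). fold (inv k) (u k) in *. lra. }
  assert (Hshort : sumR T (fun s => excess n (m1 (S s)) (inv s))
                   <= sumR T (fun s => excess n (u s) (m1 (S s)))).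
  { rewrite !sumR_excess_comm. apply sumR_le. intros i Hi. apply le_INR.
    apply (sumN_shortfall_le_excess (fun s => inv s i) (fun s => u s i)
             (fun s => m1 (S s) i) (I0 i)).
    - reflexivity.
    - intros s Hs. split.
      + apply (Hstep (S s) (inv s)); [lia|exact Hi].
      + unfold inv at 1. rewrite run_S. reflexivity.
    - intros [|k] Hk; simpl; [lia|]. apply (Hfeas (S k) i); lia. }
  specialize (Hsum T (le_n T)). nra.
Qed.

Lemma item_fdc_bound c0 c1 W rho (St I m : nat) :
  0 <= c1 <= c0 -> c0 <= W <= rho * c0 -> 0 <= rho -> (m <= St)%nat ->
  c0 * INR (St - Nat.min St I) + c1 * INR (Nat.min St I) + W * INR (Nat.min St I - m)
  <= (1 + rho) * (c0 * INR (St - m) + c1 * INR m) + W * INR (m - I).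
Proof.
  intros Hc1 HW Hrho Hm.
  destruct (Nat.le_gt_cases m (Nat.min St I)) as [Hle|Hgt].
  - replace (m - I)%nat with 0%nat by lia.
    pose proof (Nat.le_min_l St I) as Hmin.
    rewrite !minus_INR by lia. simpl INR.
    pose proof (le_INR _ _ Hle). pose proof (le_INR _ _ Hmin). pose proof (pos_INR m).
    set (s := INR St) in *. set (y := INR (Nat.min St I)) in *. set (z := INR m) in *.
    assert (W * (y - z) <= rho * c0 * (y - z)) by (apply Rmult_le_compat_r; lra).
    assert (c1 * (y - z) <= c0 * (y - z)) by (apply Rmult_le_compat_r; lra).
    assert (0 <= rho * (c0 * (s - y) + c1 * z)) by (apply Rmult_le_pos; nra).
    nra.
  - replace (Nat.min St I) with I by lia. replace (I - m)%nat with 0%nat by lia.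
    rewrite !minus_INR by lia. simpl INR.
    pose proof (le_INR I m ltac:(lia)). pose proof (le_INR m St Hm). pose proof (pos_INR I).
    assert (c0 * (INR m - INR I) <= W * (INR m - INR I)) by (apply Rmult_le_compat_r; lra).
    assert (c1 * INR I <= c1 * INR m) by (apply Rmult_le_compat_l; lra).
    assert (0 <= rho * (c0 * (INR St - INR m) + c1 * INR m)) by (apply Rmult_le_pos; nra).
    nra.
Qed.

Lemma item_rdc_bound c0 c1 W rho (St I m : nat) :
  0 <= c0 <= rho * c1 -> 0 <= c1 -> 0 <= W -> 0 <= rho -> (m <= St)%nat ->
  c0 * INR (St - 0) + c1 * INR 0 + W * INR (0 - m)
  <= (1 + rho) * (c0 * INR (St - m) + c1 * INR m) + W * INR (m - I).
Proof.
  intros Hc0 Hc1 HW Hrho Hm. rewrite Nat.sub_0_r. simpl (0 - m)%nat. simpl INR.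
  rewrite minus_INR by exact Hm.
  pose proof (le_INR m St Hm). pose proof (pos_INR m). pose proof (pos_INR (m - I)).
  assert (c0 * INR m <= rho * c1 * INR m) by (apply Rmult_le_compat_r; lra).
  assert (0 <= rho * (c0 * (INR St - INR m)))
    by (apply Rmult_le_pos; [lra|apply Rmult_le_pos; lra]).
  assert (0 <= W * INR (m - I)) by (apply Rmult_le_pos; lra).
  nra.
Qed.

(* [mh] is the tentative decision \hat m_t of an AdjV-Priority rule with threshold [eta]. *)
Definition adjv_split (eta : R) n (St : nat -> nat) (c0 c1 : nat -> R) (I mh : nat -> nat) : Prop :=
  forall i, (i < n)%nat ->
    (eta * c1 i < c0 i /\ mh i = Nat.min (St i) (I i)) \/ (c0 i <= eta * c1 i /\ mh i = 0%nat).

Section AdjVPriority.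

Variables (a eta k rho W : R) (n : nat) (St : nat -> nat) (c0 c1 : nat -> R) (I mh : nat -> nat).
Hypotheses (Ha : 0 < a) (Heta : 1 <= eta) (Hk : 0 <= k) (Hrho : eta <= rho)
  (Hkrho : k * eta <= rho) (HW : W <= k * (eta * eta * a))
  (Hc : forall i, (i < n)%nat -> a <= c1 i /\ a <= c0 i <= W)
  (Hsplit : adjv_split eta n St c0 c1 I mh).

Lemma adjv_le_demand i : (i < n)%nat -> (mh i <= St i)%nat /\ (mh i <= I i)%nat.
Proof. intros Hi. destruct (Hsplit i Hi) as [[_ ->]|[_ ->]]; lia. Qed.

Lemma adjv_fdc_item i : (i < n)%nat -> eta * c1 i < c0 i -> c1 i <= c0 i /\ W <= rho * c0 i.
Proof.
  intros Hi Hlt. destruct (Hc i Hi) as [Ha1 [Ha0 Hb0]].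
  assert (eta * a <= eta * c1 i) by (apply Rmult_le_compat_l; lra).
  assert (eta * (eta * a) <= eta * c0 i) by (apply Rmult_le_compat_l; lra).
  assert (k * (eta * (eta * a)) <= k * (eta * c0 i)) by (apply Rmult_le_compat_l; lra).
  assert (k * eta * c0 i <= rho * c0 i) by (apply Rmult_le_compat_r; lra).
  split; nra.
Qed.

Lemma adjv_var_cost_bound (m : nat -> nat) :
  (forall i, (i < n)%nat -> (m i <= St i)%nat) ->
  var_cost n St c0 c1 mh + W * excess n mh m
  <= (1 + rho) * var_cost n St c0 c1 m + W * excess n m I.
Proof.
  intros Hm. unfold var_cost, excess.
  rewrite <- !sumR_scal, <- !sumR_add. apply sumR_le. intros i Hi.
  destruct (Hc i Hi) as [Ha1 [Ha0 Hb0]].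
  destruct (Hsplit i Hi) as [[Hlt ->]|[Hge ->]].
  - destruct (adjv_fdc_item i Hi Hlt). apply item_fdc_bound; auto; lra.
  - apply item_rdc_bound; auto; nra.
Qed.

Lemma adjv_amortized f0 f1 (m : nat -> nat) :
  0 <= f0 -> 0 <= f1 ->
  f0 + f1 <= (1 + rho) * fixed_cost f0 f1 n St m ->
  (forall i, (i < n)%nat -> (m i <= St i)%nat) ->
  amortized_step f0 f1 n (1 + rho) W St c0 c1 I m mh.
Proof.
  intros H0 H1 Hfix Hm. split; [apply adjv_le_demand|].
  rewrite !period_cost_split.
  pose proof (fixed_cost_bounds f0 f1 n St mh H0 H1).
  pose proof (adjv_var_cost_bound m Hm).
  lra.
Qed.

Lemma adjv_excess_bound (m : nat -> nat) :
  W * excess n mh m <= rho * sumR n (fun i => c0 i * INR (St i)).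
Proof.
  unfold excess. rewrite <- !sumR_scal. apply sumR_le. intros i Hi.
  destruct (Hc i Hi) as [Ha1 [Ha0 Hb0]].
  pose proof (pos_INR (St i)).
  destruct (Hsplit i Hi) as [[Hlt Hmh]|[Hge ->]].
  - destruct (adjv_fdc_item i Hi Hlt).
    pose proof (le_INR (mh i - m i) (St i) ltac:(rewrite Hmh; lia)).
    pose proof (pos_INR (mh i - m i)).
    assert (W * INR (mh i - m i) <= rho * c0 i * INR (mh i - m i))
      by (apply Rmult_le_compat_r; lra).
    assert (rho * c0 i * INR (mh i - m i) <= rho * c0 i * INR (St i))
      by (apply Rmult_le_compat_l; nra).
    lra.
  - simpl. assert (0 <= rho * c0 i) by nra. nra.
Qed.

End AdjVPriority.

Lemma sqrt_div_mul_inv a b : 0 < a -> 0 < b -> sqrt (a / b) * sqrt (b / a) = 1.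
Proof.
  intros Ha Hb. rewrite <- sqrt_mult.
  - replace (a / b * (b / a)) with 1 by (field; lra). apply sqrt_1.
  - apply Rlt_le, Rdiv_lt_0_compat; lra.
  - apply Rlt_le, Rdiv_lt_0_compat; lra.
Qed.

Lemma sqrt_div_sqr a b : 0 < a -> 0 <= b -> sqrt (b / a) * sqrt (b / a) * a = b.
Proof.
  intros Ha Hb. rewrite sqrt_sqrt; [field; lra|].
  unfold Rdiv. apply Rmult_le_pos; [lra|apply Rlt_le, Rinv_0_lt_compat; lra].
Qed.

Lemma one_le_sqrt_div a b : 0 < a -> a <= b -> 1 <= sqrt (b / a).
Proof.
  intros Ha Hab. rewrite <- sqrt_1. apply sqrt_le_1_alt.
  apply Rmult_le_reg_r with a; [lra|]. unfold Rdiv. rewrite Rmult_assoc, Rinv_l; lra.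
Qed.

Definition cc_mhat a b (St : nat -> nat) (c0 c1 : nat -> R) (I : nat -> nat) : nat -> nat :=
  fun i => if Rlt_dec (c1 i) (sqrt (a / b) * c0 i) then Nat.min (St i) (I i) else O.

Lemma cc_decision_eq f0 f1 a b n St c0 c1 I :
  cc_decision f0 f1 a b n St c0 c1 I =
  if Rlt_dec (f0 + sumR n (fun i => c0 i * INR (St i)))
             (period_cost f0 f1 n St c0 c1 (cc_mhat a b St c0 c1 I))
  then (fun _ => O) else cc_mhat a b St c0 c1 I.
Proof. reflexivity. Qed.

Lemma cc_mhat_split a b n St c0 c1 I :
  0 < a -> 0 < b -> adjv_split (sqrt (b / a)) n St c0 c1 I (cc_mhat a b St c0 c1 I).
Proof.
  intros Ha Hb i _. unfold cc_mhat.
  pose proof (sqrt_div_mul_inv a b Ha Hb) as Hinv.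
  assert (HQ : 0 < sqrt (b / a)) by (apply sqrt_lt_R0, Rdiv_lt_0_compat; lra).
  destruct (Rlt_dec (c1 i) (sqrt (a / b) * c0 i)) as [Hlt|Hge]; [left|right]; split; auto.
  - apply (Rmult_lt_compat_l (sqrt (b / a))) in Hlt; [|exact HQ].
    replace (sqrt (b / a) * (sqrt (a / b) * c0 i)) with (c0 i) in Hlt
      by (rewrite <- Rmult_assoc, (Rmult_comm (sqrt (b / a))), Hinv; ring).
    exact Hlt.
  - apply Rnot_lt_le, (Rmult_le_compat_l (sqrt (b / a))) in Hge; [|lra].
    replace (sqrt (b / a) * (sqrt (a / b) * c0 i)) with (c0 i) in Hge
      by (rewrite <- Rmult_assoc, (Rmult_comm (sqrt (b / a))), Hinv; ring).
    exact Hge.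
Qed.

Definition cc_rho f0 f1 a b : R := Rmax (f0 / f1) (sqrt (b / a)).

Section CostComparison.

Variables (f0 f1 a b : R) (n : nat) (St : nat -> nat) (c0 c1 : nat -> R) (I m : nat -> nat).
Hypotheses (Hf0 : 0 <= f0) (Hf1 : 0 < f1) (Ha : 0 < a) (Hab : a < b)
  (Hc : forall i, (i < n)%nat -> a <= c0 i <= b /\ a <= c1 i <= b)
  (Hm : forall i, (i < n)%nat -> (m i <= St i)%nat).

Lemma cc_rho_bounds :
  1 <= sqrt (b / a) <= cc_rho f0 f1 a b /\ f0 <= cc_rho f0 f1 a b * f1.
Proof.
  pose proof (one_le_sqrt_div a b Ha (Rlt_le _ _ Hab)).
  pose proof (Rmax_l (f0 / f1) (sqrt (b / a))) as Hl.
  apply (Rmult_le_compat_r f1) in Hl; [|lra].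
  replace (f0 / f1 * f1) with f0 in Hl by (field; lra).
  split; [split; [lra|apply Rmax_r]|exact Hl].
Qed.

Lemma cc_mhat_amortized :
  f0 + f1 <= (1 + cc_rho f0 f1 a b) * fixed_cost f0 f1 n St m ->
  amortized_step f0 f1 n (1 + cc_rho f0 f1 a b) b St c0 c1 I m (cc_mhat a b St c0 c1 I).
Proof.
  intros Hfix. destruct cc_rho_bounds as [[HQ Hrho] _].
  pose proof (sqrt_div_sqr a b Ha ltac:(lra)).
  apply (adjv_amortized a (sqrt (b / a)) 1); try lra.
  - intros i Hi. destruct (Hc i Hi). lra.
  - apply cc_mhat_split; lra.
  - exact Hm.
Qed.

Lemma cc_amortized_fdc_plan :
  anypos n m = true ->
  amortized_step f0 f1 n (1 + cc_rho f0 f1 a b) b St c0 c1 I m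
    (cc_decision f0 f1 a b n St c0 c1 I).
Proof.
  intros Em. destruct cc_rho_bounds as [[HQ Hrho] Hf0rho].
  set (rho := cc_rho f0 f1 a b) in *.
  assert (Hfix : f0 + f1 <= (1 + rho) * fixed_cost f0 f1 n St m).
  { unfold fixed_cost. rewrite Em. simpl indic.
    set (r := indic (anypos n (fun i => (St i - m i)%nat))).
    assert (0 <= r <= 1) by apply indic_bounds.
    assert (0 <= (1 + rho) * (f0 * r)) by (apply Rmult_le_pos; [lra|apply Rmult_le_pos; lra]).
    nra. }
  pose proof (cc_mhat_amortized Hfix) as Hmh. fold rho in Hmh.
  rewrite cc_decision_eq.
  destruct (Rlt_dec _ _) as [Hrej|_]; [|exact Hmh].
  destruct Hmh as [_ Hmh]. split; [intros; lia|].
  rewrite period_cost_all_rdc, excess_0 by (intros; lia).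
  pose proof (indic_bounds (anypos n St)).
  assert (f0 * indic (anypos n St) <= f0) by nra.
  assert (0 <= b * excess n (cc_mhat a b St c0 c1 I) m)
    by (apply Rmult_le_pos; [lra|apply excess_nonneg]).
  lra.
Qed.

Lemma cc_amortized_rdc_plan :
  (forall i, (i < n)%nat -> m i = 0%nat) ->
  amortized_step f0 f1 n (1 + cc_rho f0 f1 a b) b St c0 c1 I m
    (cc_decision f0 f1 a b n St c0 c1 I).
Proof.
  intros Hm0. destruct cc_rho_bounds as [[HQ Hrho] _].
  pose proof (sqrt_div_sqr a b Ha ltac:(lra)).
  set (rho := cc_rho f0 f1 a b) in *.
  set (C := sumR n (fun i => c0 i * INR (St i))).
  assert (HC : 0 <= C).
  { apply sumR_nonneg. intros i Hi. destruct (Hc i Hi). pose proof (pos_INR (St i)). nra. }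
  pose proof (cc_mhat_split a b n St c0 c1 I Ha ltac:(lra)) as Hsplit.
  pose proof (adjv_le_demand _ _ _ _ _ _ _ Hsplit) as Hmh_le.
  assert (Hex : b * excess n (cc_mhat a b St c0 c1 I) m <= rho * C).
  { apply (adjv_excess_bound a (sqrt (b / a)) 1 rho b n St c0 c1 I); try lra.
    - intros i Hi. destruct (Hc i Hi). lra.
    - exact Hsplit. }
  unfold amortized_step.
  rewrite (period_cost_ext f0 f1 n St c0 c1 m (fun _ => 0%nat) Hm0), period_cost_all_rdc.
  fold C. pose proof (indic_bounds (anypos n St)).
  assert (0 <= rho * (f0 * indic (anypos n St))) by (apply Rmult_le_pos; nra).
  assert (0 <= rho * C) by (apply Rmult_le_pos; lra).
  assert (0 <= b * excess n m I) by (apply Rmult_le_pos; [lra|apply excess_nonneg]).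
  rewrite cc_decision_eq. destruct (Rlt_dec _ _) as [_|Hacc].
  - split; [intros; lia|].
    rewrite period_cost_all_rdc, excess_0 by (intros; lia). fold C. lra.
  - split; [apply Hmh_le|].
    apply Rnot_lt_le in Hacc. fold C in Hacc.
    assert (Hcost : period_cost f0 f1 n St c0 c1 (cc_mhat a b St c0 c1 I)
                    <= f0 * indic (anypos n St) + C).
    { destruct (anypos n St) eqn:ES; simpl indic; [lra|].
      rewrite period_cost_no_demand; [nra|apply anypos_false_spec; exact ES|apply Hmh_le]. }
    lra.
Qed.

Lemma cc_amortized :
  amortized_step f0 f1 n (1 + cc_rho f0 f1 a b) b St c0 c1 I m
    (cc_decision f0 f1 a b n St c0 c1 I).
Proof.
  destruct (anypos n m) eqn:Em.
  - exact (cc_amortized_fdc_plan Em).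
  - apply cc_amortized_rdc_plan, anypos_false_spec, Em.
Qed.

End CostComparison.

Lemma forallb_seq_false (p : nat -> bool) n :
  forallb p (seq 0 n) = false -> exists i, (i < n)%nat /\ p i = false.
Proof.
  induction n as [|n IH]; [discriminate|].
  rewrite seq_S, forallb_app. simpl. rewrite Bool.andb_true_r.
  intros H. apply Bool.andb_false_iff in H as [H|H].
  - destruct (IH H) as [i [Hi Hp]]. exists i. split; [lia|exact Hp].
  - exists n. split; [lia|exact H].
Qed.

Lemma one_le_excess n x y : forallb (fun i => Nat.leb (x i) (y i)) (seq 0 n) = false ->
  1 <= excess n x y.
Proof.
  intros H. apply forallb_seq_false in H as [i [Hi Hxy]]. apply Nat.leb_gt in Hxy.
  apply Rle_trans with (INR (x i - y i)).
  - apply (le_INR 1). lia.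
  - apply (sumR_ge_term n (fun i => INR (x i - y i))); [exact Hi|intros; apply pos_INR].
Qed.

Lemma adjv_var_cost_le_fdc eta b n St c0 c1 I mh :
  1 <= eta -> (forall i, (i < n)%nat -> 0 <= c0 i <= b /\ 0 <= c1 i) ->
  adjv_split eta n St c0 c1 I mh ->
  var_cost n St c0 c1 mh <= eta * sumR n (fun i => c1 i * INR (St i)) + b * excess n St I.
Proof.
  intros Heta Hc Hsplit. unfold var_cost, excess.
  rewrite <- !sumR_scal, <- sumR_add. apply sumR_le. intros i Hi.
  destruct (Hc i Hi) as [Hb0 Hc1].
  pose proof (pos_INR (St i)). pose proof (pos_INR (St i - I i)).
  assert (0 <= c1 i * INR (St i)) by (apply Rmult_le_pos; lra).
  assert (c1 i * INR (St i) <= eta * (c1 i * INR (St i))) by nra.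
  destruct (Hsplit i Hi) as [[_ ->]|[Hge ->]].
  - replace (St i - Nat.min (St i) (I i))%nat with (St i - I i)%nat by lia.
    pose proof (le_INR _ _ (Nat.le_min_l (St i) (I i))).
    assert (c1 i * INR (Nat.min (St i) (I i)) <= c1 i * INR (St i))
      by (apply Rmult_le_compat_l; lra).
    assert (c0 i * INR (St i - I i) <= b * INR (St i - I i)) by (apply Rmult_le_compat_r; lra).
    lra.
  - rewrite Nat.sub_0_r. simpl INR.
    assert (c0 i * INR (St i) <= eta * c1 i * INR (St i)) by (apply Rmult_le_compat_r; lra).
    assert (0 <= b * INR (St i - I i)) by (apply Rmult_le_pos; lra).
    lra.
Qed.

Definition os_mhat eta (St : nat -> nat) (c0 c1 : nat -> R) (I : nat -> nat) : nat -> nat :=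
  fun i => if Rlt_dec (c1 i) (c0 i / eta) then Nat.min (St i) (I i) else O.

Lemma os_mhat_split eta n St c0 c1 I :
  0 < eta -> adjv_split eta n St c0 c1 I (os_mhat eta St c0 c1 I).
Proof.
  intros Heta i _. unfold os_mhat.
  destruct (Rlt_dec (c1 i) (c0 i / eta)) as [Hlt|Hge]; [left|right]; split; auto.
  - apply (Rmult_lt_compat_l eta) in Hlt; [|exact Heta].
    replace (eta * (c0 i / eta)) with (c0 i) in Hlt by (field; lra). exact Hlt.
  - apply Rnot_lt_le, (Rmult_le_compat_l eta) in Hge; [|lra].
    replace (eta * (c0 i / eta)) with (c0 i) in Hge by (field; lra). exact Hge.
Qed.

Lemma os_decision_cases eta theta n St c0 c1 I :
  (os_decision eta theta n St c0 c1 I = St /\ INR (sumN n St) <= theta /\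
     forall i, (i < n)%nat -> (St i <= I i)%nat) \/
  (os_decision eta theta n St c0 c1 I = os_mhat eta St c0 c1 I /\
     (theta < INR (sumN n St) \/ 1 <= excess n St I)).
Proof.
  unfold os_decision. fold (os_mhat eta St c0 c1 I).
  destruct (Rle_dec (INR (sumN n St)) theta) as [Hsmall|Hlarge];
    [|right; split; [reflexivity|left; lra]].
  destruct (forallb (fun i => Nat.leb (St i) (I i)) (seq 0 n)) eqn:Hall.
  - left. split; [reflexivity|split; [exact Hsmall|]].
    intros i Hi. rewrite forallb_forall in Hall. apply Nat.leb_le, Hall, in_seq. lia.
  - right. split; [reflexivity|right]. apply one_le_excess, Hall.
Qed.

(* For [a < b], [bot_eta] is the least admissible [eta] and [bot_theta] its [theta]. *)
Definition os_admissible f0 a b eta theta : Prop :=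
  1 <= eta /\ b <= eta * eta * a /\ f0 <= 2 * (eta * eta * a) /\ theta * (2 * a * eta) = f0.

Section OrderSize.

Variables (f0 f1 a b eta theta : R) (n : nat) (St : nat -> nat) (c0 c1 : nat -> R).
Variables (I m : nat -> nat).
Hypotheses (Hf1 : 0 <= f1) (Hf10 : f1 <= f0) (Ha : 0 < a) (Hab : a <= b)
  (Hadm : os_admissible f0 a b eta theta)
  (Hc : forall i, (i < n)%nat -> a <= c0 i <= b /\ a <= c1 i <= b)
  (Hm : forall i, (i < n)%nat -> (m i <= St i)%nat).

Lemma os_theta_bounds : 0 <= theta /\ theta <= eta /\ b * theta <= eta * f0 / 2.
Proof.
  destruct Hadm as [Heta [Hb [Hf0 Htheta]]].
  assert (Hpos : 0 < 2 * a * eta) by nra.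
  assert (Hth : theta = f0 / (2 * a * eta)) by (rewrite <- Htheta; field; lra).
  assert (0 <= theta)
    by (rewrite Hth; apply Rmult_le_pos; [lra|apply Rlt_le, Rinv_0_lt_compat; lra]).
  repeat split; [lra| |].
  - apply Rmult_le_reg_r with (2 * a * eta); [lra|]. nra.
  - apply Rmult_le_reg_r with (2 * a * eta); [lra|].
    replace (b * theta * (2 * a * eta)) with (b * (theta * (2 * a * eta))) by ring.
    rewrite Htheta. replace (eta * f0 / 2 * (2 * a * eta)) with (f0 * (eta * eta * a)) by field.
    rewrite (Rmult_comm b). apply Rmult_le_compat_l; lra.
Qed.

Lemma sum_c1_bounds :
  a * INR (sumN n St) <= sumR n (fun i => c1 i * INR (St i)) <= b * INR (sumN n St).
Proof. apply sumR_weighted_bounds. intros i Hi. apply Hc, Hi. Qed.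

Lemma os_full_amortized_rdc_plan :
  INR (sumN n St) <= theta -> (forall i, (i < n)%nat -> (St i <= I i)%nat) ->
  anypos n (fun i => (St i - m i)%nat) = true ->
  amortized_step f0 f1 n (4 * eta) (f0 + b) St c0 c1 I m St.
Proof.
  intros Hsmall HStI Erdc. split; [exact HStI|].
  destruct Hadm as [Heta _]. destruct os_theta_bounds as [Ht0 [Hteta Hbt]].
  assert (Hplan : f0 <= period_cost f0 f1 n St c0 c1 m).
  { rewrite period_cost_split. unfold fixed_cost. rewrite Erdc. simpl indic.
    pose proof (indic_bounds (anypos n m)).
    pose proof (var_cost_nonneg n St c0 c1 m ltac:(intros i Hi; destruct (Hc i Hi); lra)).
    nra. }
  rewrite period_cost_all_fdc.
  pose proof (indic_bounds (anypos n St)). pose proof sum_c1_bounds.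
  pose proof (excess_le_total n St m). pose proof (excess_nonneg n m I).
  assert (b * INR (sumN n St) <= b * theta) by (apply Rmult_le_compat_l; lra).
  assert ((f0 + b) * excess n St m <= (f0 + b) * theta) by (apply Rmult_le_compat_l; lra).
  assert (f0 * theta <= f0 * eta) by (apply Rmult_le_compat_l; lra).
  assert (4 * eta * f0 <= 4 * eta * period_cost f0 f1 n St c0 c1 m)
    by (apply Rmult_le_compat_l; lra).
  assert (0 <= (f0 + b) * excess n m I) by (apply Rmult_le_pos; lra).
  nra.
Qed.

Lemma os_mhat_amortized_rdc_plan :
  anypos n (fun i => (St i - m i)%nat) = true ->
  amortized_step f0 f1 n (4 * eta) (f0 + b) St c0 c1 I m (os_mhat eta St c0 c1 I).
Proof.
  intros Erdc. destruct Hadm as [Heta [Hb [Hf0 _]]].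
  replace (4 * eta) with (1 + (4 * eta - 1)) by ring.
  apply (adjv_amortized a eta 3); try lra.
  - intros i Hi. destruct (Hc i Hi). lra.
  - apply os_mhat_split. lra.
  - unfold fixed_cost. rewrite Erdc. simpl indic.
    pose proof (indic_bounds (anypos n m)).
    assert (0 <= (1 + (4 * eta - 1)) * (f1 * indic (anypos n m))) by (apply Rmult_le_pos; nra).
    nra.
  - exact Hm.
Qed.

Lemma os_trigger_pays_f0 :
  theta < INR (sumN n St) \/ 1 <= excess n St I ->
  f0 <= 2 * eta * sumR n (fun i => c1 i * INR (St i)) + f0 * excess n St I.
Proof.
  destruct Hadm as [Heta [_ [_ Htheta]]].
  destruct sum_c1_bounds as [HX _].
  pose proof (excess_nonneg n St I).
  intros [Hlarge|Hshort].
  - assert (theta * (2 * a * eta) <= INR (sumN n St) * (2 * a * eta))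
      by (apply Rmult_le_compat_r; nra).
    assert (0 <= f0 * excess n St I) by (apply Rmult_le_pos; lra).
    nra.
  - assert (f0 * 1 <= f0 * excess n St I) by (apply Rmult_le_compat_l; lra).
    assert (0 <= 2 * eta * sumR n (fun i => c1 i * INR (St i))).
    { apply Rmult_le_pos; [lra|]. apply sumR_nonneg. intros i Hi.
      destruct (Hc i Hi). apply Rmult_le_pos; [lra|apply pos_INR]. }
    lra.
Qed.

Lemma os_mhat_amortized_fdc_plan :
  theta < INR (sumN n St) \/ 1 <= excess n St I ->
  amortized_step f0 f1 n (4 * eta) (f0 + b) St c0 c1 I St (os_mhat eta St c0 c1 I).
Proof.
  intros Htrig. destruct Hadm as [Heta _].
  assert (Hsplit := os_mhat_split eta n St c0 c1 I ltac:(lra)).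
  pose proof (adjv_le_demand eta n St c0 c1 I _ Hsplit) as Hle.
  split; [apply Hle|].
  rewrite (excess_0 n (os_mhat eta St c0 c1 I) St) by apply Hle.
  rewrite period_cost_all_fdc.
  pose proof (excess_nonneg n St I).
  set (X := sumR n (fun i => c1 i * INR (St i))).
  assert (0 <= X).
  { destruct sum_c1_bounds as [HX _]. fold X in HX.
    pose proof (pos_INR (sumN n St)). nra. }
  assert (0 <= eta * X) by (apply Rmult_le_pos; lra).
  destruct (anypos n St) eqn:ES; simpl indic.
  - pose proof (os_trigger_pays_f0 Htrig) as Hf0. fold X in Hf0.
    pose proof (adjv_var_cost_le_fdc eta b n St c0 c1 I _ Heta
                  ltac:(intros i Hi; destruct (Hc i Hi); lra) Hsplit) as Hvar. fold X in Hvar.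
    rewrite period_cost_split.
    pose proof (fixed_cost_bounds f0 f1 n St (os_mhat eta St c0 c1 I) ltac:(lra) Hf1).
    assert (f1 <= 4 * eta * f1) by nra.
    lra.
  - rewrite period_cost_no_demand; [|apply anypos_false_spec; exact ES|apply Hle].
    assert (0 <= (f0 + b) * excess n St I) by (apply Rmult_le_pos; lra).
    lra.
Qed.

Lemma os_amortized :
  amortized_step f0 f1 n (4 * eta) (f0 + b) St c0 c1 I m (os_decision eta theta n St c0 c1 I).
Proof.
  assert (Heta : 1 <= eta) by apply Hadm.
  destruct (anypos n (fun i => (St i - m i)%nat)) eqn:Erdc.
  - destruct (os_decision_cases eta theta n St c0 c1 I) as [[-> [Hsmall HStI]]|[-> _]].
    + exact (os_full_amortized_rdc_plan Hsmall HStI Erdc).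
    + exact (os_mhat_amortized_rdc_plan Erdc).
  - assert (HmSt : forall i, (i < n)%nat -> m i = St i).
    { intros i Hi. pose proof (proj1 (anypos_false_spec _ _) Erdc i Hi).
      specialize (Hm i Hi). simpl in H. lia. }
    unfold amortized_step.
    rewrite (period_cost_ext f0 f1 n St c0 c1 m St HmSt).
    rewrite (excess_ext n (os_decision eta theta n St c0 c1 I) m
                          (os_decision eta theta n St c0 c1 I) St)
      by (intros i Hi; split; [reflexivity|apply HmSt; exact Hi]).
    rewrite (excess_ext n m I St I) by (intros i Hi; split; [apply HmSt; exact Hi|reflexivity]).
    destruct (os_decision_cases eta theta n St c0 c1 I) as [[-> [_ HStI]]|[-> Htrig]].
    + split; [exact HStI|]. rewrite excess_0 by (intros; lia).
      pose proof (period_cost_nonneg f0 f1 n St c0 c1 St ltac:(lra) Hf1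
                    ltac:(intros i Hi; destruct (Hc i Hi); lra)).
      pose proof (excess_nonneg n St I).
      assert (0 <= (f0 + b) * excess n St I) by (apply Rmult_le_pos; [nra|lra]).
      nra.
    + exact (os_mhat_amortized_fdc_plan Htrig).
Qed.

End OrderSize.

Lemma plan_cost_nonneg f0 f1 a b n T ord c0 c1 m1 :
  0 <= f0 -> 0 <= f1 -> 0 <= a -> costs_in a b n T c0 -> costs_in a b n T c1 ->
  0 <= plan_cost f0 f1 n T ord c0 c1 m1.
Proof.
  intros H0 H1 Ha Hc0 Hc1. apply sumR_nonneg. intros s Hs.
  apply period_cost_nonneg; auto. intros i Hi.
  destruct (Hc0 (S s) i) as [? _], (Hc1 (S s) i) as [? _]; try lia. lra.
Qed.

Lemma cc_competitive f0 f1 a b n T I0 ord c0 c1 m1 :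
  0 <= f0 -> 0 < f1 -> 0 < a -> a < b ->
  costs_in a b n T c0 -> costs_in a b n T c1 -> feasible n T I0 ord m1 ->
  policy_cost f0 f1 n I0 ord c0 c1 (cc_decision f0 f1 a b n) T
  <= (1 + cc_rho f0 f1 a b) * plan_cost f0 f1 n T ord c0 c1 m1.
Proof.
  intros Hf0 Hf1 Ha Hab Hc0 Hc1 Hfeas.
  apply (policy_cost_le_of_amortized _ _ _ _ _ _ _ _ _ _ _ b); [lra|exact Hfeas|].
  intros t I Ht. apply cc_amortized; auto.
  intros i Hi. apply (Hfeas t i Ht Hi).
Qed.

Lemma os_competitive f0 f1 a b eta theta n T I0 ord c0 c1 m1 :
  0 <= f1 -> f1 <= f0 -> 0 < a -> a <= b -> os_admissible f0 a b eta theta ->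
  costs_in a b n T c0 -> costs_in a b n T c1 -> feasible n T I0 ord m1 ->
  policy_cost f0 f1 n I0 ord c0 c1 (os_decision eta theta n) T
  <= 4 * eta * plan_cost f0 f1 n T ord c0 c1 m1.
Proof.
  intros Hf1 Hf10 Ha Hab Hadm Hc0 Hc1 Hfeas.
  apply (policy_cost_le_of_amortized _ _ _ _ _ _ _ _ _ _ _ (f0 + b)); [lra|exact Hfeas|].
  intros t I Ht. apply (os_amortized f0 f1 a b); auto.
  intros i Hi. apply (Hfeas t i Ht Hi).
Qed.

Lemma bot_eta_sqr f0 a b : 0 <= f0 -> 0 < a -> 0 < b ->
  bot_eta f0 a b * bot_eta f0 a b * a = Rmax (f0 / 2) b.
Proof.
  intros Hf0 Ha Hb. unfold bot_eta. apply sqrt_div_sqr; [exact Ha|].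
  apply Rle_trans with b; [lra|apply Rmax_r].
Qed.

Lemma bot_admissible f0 a b : 0 <= f0 -> 0 < a -> a < b ->
  os_admissible f0 a b (bot_eta f0 a b) (bot_theta f0 a b).
Proof.
  intros Hf0 Ha Hab. pose proof (bot_eta_sqr f0 a b Hf0 Ha ltac:(lra)) as Hsq.
  pose proof (Rmax_l (f0 / 2) b). pose proof (Rmax_r (f0 / 2) b).
  assert (Heta : 1 <= bot_eta f0 a b) by (apply one_le_sqrt_div; lra).
  repeat split; [exact Heta|lra|lra|].
  unfold bot_theta. field. split; lra.
Qed.

Lemma bot_eta_eq_Rmax f0 a b : 0 < a ->
  bot_eta f0 a b = Rmax (sqrt (f0 / (2 * a))) (sqrt (b / a)).
Proof.
  intros Ha. unfold bot_eta. replace (f0 / (2 * a)) with (f0 / 2 / a) by (field; lra).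
  assert (Hmono : forall x y, x <= y -> sqrt (x / a) <= sqrt (y / a)).
  { intros x y Hxy. apply sqrt_le_1_alt. unfold Rdiv.
    apply Rmult_le_compat_r; [apply Rlt_le, Rinv_0_lt_compat|]; lra. }
  unfold Rmax at 1. destruct (Rle_dec (f0 / 2) b) as [Hle|Hgt].
  - rewrite Rmax_right by (apply Hmono; exact Hle). reflexivity.
  - rewrite Rmax_left by (apply Hmono; lra). reflexivity.
Qed.

Lemma cc_ratio_le_bound1 f0 f1 a b : 0 < f1 -> 0 < a -> a < b ->
  use_cc f0 f1 a b -> 1 + cc_rho f0 f1 a b <= bound1 f0 f1 a b.
Proof.
  intros Hf1 Ha Hab Hcase. unfold use_cc, cc_rho, bound1 in *.
  destruct (Rlt_dec f0 f1) as [_|Hge]; [lra|]. apply Rmin_glb; [lra|].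
  change (sqrt (Rmax (f0 / 2) b / a)) with (bot_eta f0 a b). rewrite bot_eta_eq_Rmax by exact Ha.
  destruct Hcase as [Hle|Hcc]; [|exact Hcc].
  replace (f0 / f1) with 1 by (field_simplify_eq; lra).
  pose proof (one_le_sqrt_div a b Ha (Rlt_le _ _ Hab)).
  pose proof (Rmax_r (sqrt (f0 / (2 * a))) (sqrt (b / a))).
  pose proof (sqrt_pos 2).
  rewrite Rmax_right by lra. nra.
Qed.

Lemma os_ratio_le_bound1 f0 f1 a b : 0 < a ->
  ~ use_cc f0 f1 a b -> 4 * bot_eta f0 a b <= bound1 f0 f1 a b.
Proof.
  intros Ha Hos. unfold use_cc, bound1 in *.
  destruct (Rlt_dec f0 f1) as [Hlt|_]; [exfalso; apply Hos; left; lra|].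
  assert (Hlarge : ~ 1 + Rmax (f0 / f1) (sqrt (b / a))
                     <= (4 + sqrt 2) * Rmax (sqrt (f0 / (2 * a))) (sqrt (b / a)))
    by (intros H; apply Hos; right; exact H).
  change (sqrt (Rmax (f0 / 2) b / a)) with (bot_eta f0 a b).
  rewrite bot_eta_eq_Rmax by exact Ha.
  pose proof (sqrt_pos 2). pose proof (sqrt_pos (b / a)).
  pose proof (Rmax_r (sqrt (f0 / (2 * a))) (sqrt (b / a))).
  apply Rmin_glb; nra.
Qed.

Lemma bound1_le_bound2 f0 f1 a b : 0 <= f0 -> 0 < f1 -> 0 < a -> a < b ->
  bound1 f0 f1 a b <= bound2 f0 f1 a b.
Proof.
  intros Hf0 Hf1 Ha Hab. pose proof (one_le_sqrt_div a b Ha (Rlt_le _ _ Hab)) as HQ.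
  set (Q := sqrt (b / a)) in *.
  assert (Hs2 : sqrt 2 * sqrt 2 = 2) by (apply sqrt_sqrt; lra).
  pose proof (sqrt_pos 2).
  unfold bound1, bound2. fold Q. destruct (Rlt_dec f0 f1) as [Hlt|Hge].
  - assert (f0 / f1 < 1) by (apply Rmult_lt_reg_r with f1; [lra|]; field_simplify; lra).
    rewrite Rmax_right with (x := f0 / f1) by lra.
    eapply Rle_trans; [|apply Rmax_r]. nra.
  - apply Rnot_lt_le in Hge.
    assert (1 <= f0 / f1) by (apply Rmult_le_reg_r with f1; [lra|]; field_simplify; lra).
    unfold Rmax at 2. destruct (Rle_dec (f0 / 2) b).
    + eapply Rle_trans; [apply Rmin_r|]. apply Rmax_r.
    + set (y := sqrt (f0 / 2 / a)).
      assert (HB : (4 + sqrt 2) * y = (2 * sqrt 2 + 1) * sqrt (f0 / a)).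
      { replace (f0 / a) with (2 * (f0 / 2 / a)) by (field; lra).
        rewrite sqrt_mult by (lra || (unfold Rdiv; apply Rmult_le_pos;
                                        [lra|left; apply Rinv_0_lt_compat; lra])).
        fold y. transitivity (2 * (sqrt 2 * sqrt 2) * y + sqrt 2 * y); [rewrite Hs2|]; ring. }
      rewrite HB. unfold Rmax at 1. destruct (Rle_dec (f0 / f1) Q).
      * eapply Rle_trans; [apply Rmin_l|]. eapply Rle_trans; [|apply Rmax_r]. nra.
      * eapply Rle_trans; [|apply Rmax_l]. apply Rmin_glb.
        -- eapply Rle_trans; [apply Rmin_l|]. lra.
        -- apply Rmin_r.
Qed.

Theorem corollary1 (f0 f1 a b : R) (hf0 : 0 <= f0) (hf1 : 0 < f1)
  (ha : 0 < a) (hab : a < b) :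
  (forall (n T : nat) (I0 : nat -> nat) (ord : nat -> nat -> nat)
          (c0 c1 : nat -> nat -> R),
     costs_in a b n T c0 -> costs_in a b n T c1 ->
     forall m1 : nat -> nat -> nat, feasible n T I0 ord m1 ->
       policy_cost f0 f1 n I0 ord c0 c1 (better_of_two f0 f1 a b n) T
         <= bound1 f0 f1 a b * plan_cost f0 f1 n T ord c0 c1 m1)
  /\ bound1 f0 f1 a b <= bound2 f0 f1 a b.
Proof.
  split; [|exact (bound1_le_bound2 f0 f1 a b hf0 hf1 ha hab)].
  intros n T I0 ord c0 c1 Hc0 Hc1 m1 Hfeas.
  pose proof (plan_cost_nonneg f0 f1 a b n T ord c0 c1 m1 hf0
                (Rlt_le _ _ hf1) (Rlt_le _ _ ha) Hc0 Hc1).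
  assert (Hcc : use_cc f0 f1 a b ->
                policy_cost f0 f1 n I0 ord c0 c1 (cc_decision f0 f1 a b n) T
                <= bound1 f0 f1 a b * plan_cost f0 f1 n T ord c0 c1 m1).
  { intros Huse. eapply Rle_trans; [apply cc_competitive; eauto|].
    apply Rmult_le_compat_r; [assumption|apply cc_ratio_le_bound1; auto]. }
  unfold better_of_two.
  destruct (Rle_dec f0 f1) as [Hle|Hgt]; [apply Hcc; left; exact Hle|].
  destruct (Rle_dec _ _) as [Hsmall|Hlarge]; [apply Hcc; right; exact Hsmall|].
  assert (Hos : ~ use_cc f0 f1 a b) by (intros [?|?]; contradiction).
  apply Rle_trans with (4 * bot_eta f0 a b * plan_cost f0 f1 n T ord c0 c1 m1).
  - apply (os_competitive f0 f1 a b); try lra; auto. apply bot_admissible; auto.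
  - apply Rmult_le_compat_r; [assumption|apply os_ratio_le_bound1; auto].
Qed.
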